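(* Consider the GTFG system with $\lambda=0$ (setting below) and the invariant set $\mathcal M_2$, the closure in $\mathcal P^6$ of the set of points with $x_1x_2\ne0$ satisfying $F=0$, $F_1=0$, with partial integrals $\mathsf M$ and $L$ (defined below). Then the outer type of the points of $\mathcal M_2$ is as follows: if $\mathsf M=\varepsilon_1^2$ or $L=0$, the points are degenerate; if $L\neq0$, then all points with $\mathsf M>\varepsilon_1^2$ have outer type ''center'' and all points with $\mathsf M<\varepsilon_1^2$ have outer type ''saddle''. (Precisely, $C_\Phi=-4r^4(\mathsf M-\varepsilon_1^2)L^2$.)
   Context: Phase variables $\mathbf M,\boldsymbol\alpha,\boldsymbol\beta\in\mathbb R^3$ on $e(3,2)^*\cong\mathbb R^9$ with Lie–Poisson dynamics: a function $\Phi$ generates $\mathrm{sgrad}\,\Phi$: $\dot{\mathbf M}=\mathbf M\times\partial\Phi/\partial\mathbf M+\boldsymbol\alpha\times\partial\Phi/\partial\boldsymbol\alpha+\boldsymbol\beta\times\partial\Phi/\partial\boldsymbol\beta$, $\dot{\boldsymbol\alpha}=\boldsymbol\alpha\times\partial\Phi/\partial\mathbf M$, $\dot{\boldsymbol\beta}=\boldsymbol\beta\times\partial\Phi/\partial\mathbf M$. Constants $a>b>0$, $p^2=a^2+b^2$, $r^2=a^2-b^2$; phase space $\mathcal P^6=\{\boldsymbol\alpha^2=a^2,\boldsymbol\beta^2=b^2,\boldsymbol\alpha\cdot\boldsymbol\beta=0\}$. Real parameters $\varepsilon_0\ge0,\varepsilon_1,\lambda$. GTFG Hamiltonian $H=\tfrac14(M_1^2+M_2^2)+\tfrac12(M_3-\lambda)^2-\varepsilon_1[(\alpha_2M_3-\alpha_3M_2)+(\beta_3M_1-\beta_1M_3)]-\varepsilon_0(\alpha_1+\beta_2)$,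 with further first integrals $K,G$: $K=\big[\tfrac14(M_1^2-M_2^2)+\varepsilon_0(\alpha_1-\beta_2)+\varepsilon_1\big((\boldsymbol\alpha\times\mathbf M)\cdot\mathbf e_1-(\boldsymbol\beta\times\mathbf M)\cdot\mathbf e_2-\varepsilon_1(\boldsymbol\alpha^2-\boldsymbol\beta^2)\big)\big]^2+\big[\tfrac12M_1M_2+\varepsilon_0(\alpha_2+\beta_1)+\varepsilon_1\big((\boldsymbol\alpha\times\mathbf M)\cdot\mathbf e_2+(\boldsymbol\beta\times\mathbf M)\cdot\mathbf e_1-2\varepsilon_1\boldsymbol\alpha\cdot\boldsymbol\beta\big)\big]^2$ (for $\lambda=0$), $G=\tfrac14[(\mathbf M\cdot\boldsymbol\alpha)^2+(\mathbf M\cdot\boldsymbol\beta)^2]+\tfrac12M_3(\boldsymbol\alpha\times\boldsymbol\beta)\cdot\mathbf M+\varepsilon_0[\boldsymbol\beta^2\alpha_1+\boldsymbol\alpha^2\beta_2-(\boldsymbol\alpha\cdot\boldsymbol\beta)(\alpha_2+\beta_1)]-\varepsilon_1[\boldsymbol\beta^2(\boldsymbol\alpha\times\mathbf M)\cdot\mathbf e_1+\boldsymbol\alpha^2(\boldsymbol\beta\times\mathbf M)\cdot\mathbf e_2-(\boldsymbol\alpha\cdot\boldsymbol\beta)((\boldsymbol\alpha\times\mathbf M)\cdot\mathbf e_2+(\boldsymbol\beta\times\mathbf M)\cdot\mathbf e_1)]$ (for $\lambda=0$), where $\mathbf e_1=(1,0,0)$, $\mathbf e_2=(0,1,0)$.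 Complex variables: $x_{1,2}=(\alpha_1-\beta_2)\pm\mathrm i(\alpha_2+\beta_1)$, $y_{1,2}=(\alpha_1+\beta_2)\pm\mathrm i(\alpha_2-\beta_1)$, $z_{1,2}=\alpha_3\pm\mathrm i\beta_3$, $w_{1,2}=\tfrac12(M_1\pm\mathrm iM_2)$, $w_3=M_3-\lambda$; $\sqrt{x_1x_2}=|x_1|$. Functions: $\xi_1=w_1^2+\varepsilon_0x_1-\mathrm i\varepsilon_1(x_1w_3-2z_1w_1)-\varepsilon_1^2r^2$, $\xi_2=w_2^2+\varepsilon_0x_2+\mathrm i\varepsilon_1(x_2w_3-2z_2w_2)-\varepsilon_1^2r^2$; $F=\sqrt{x_1x_2}\,w_3-\frac{x_2z_1w_1+x_1z_2w_2}{\sqrt{x_1x_2}}+\mathrm i\varepsilon_1r^2\frac{x_1-x_2}{\sqrt{x_1x_2}}$; $F_1=\frac{x_2}{x_1}\xi_1-\frac{x_1}{x_2}\xi_2$; $\mathsf M=\frac1{2r^2}\big(\frac{x_2}{x_1}\xi_1+\frac{x_1}{x_2}\xi_2\big)+\varepsilon_1^2$; $L=\frac1{\sqrt{x_1x_2}}[(w_1+\mathrm i\varepsilon_1z_1)(w_2-\mathrm i\varepsilon_1z_2)+(x_1x_2+z_1z_2)(\mathsf M-\varepsilon_1^2)]+\varepsilon_1^2\sqrt{x_1x_2}$. Outer type: $\mathcal M_2$ lies in $\{\Phi=0,d\Phi=0\}$ for the first integral $\Phi=(p^2H-2G+\varepsilon_1^2r^4)^2-r^4K$ (equivalently one may use $\Phi_2=\tfrac14F_1^2-F^2(\mathsf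 M-\varepsilon_1^2)$, which gives the same linearization on $\mathcal M_2$ up to positive factor conventions used in the paper). Each $x\in\mathcal M_2$ is a zero of $\mathrm{sgrad}\,\Phi$; let $A_\Phi$ be its linearization at $x$ on $\mathbb R^9$; its characteristic polynomial is $-\mu^7(\mu^2-C_\Phi)$ with $C_\Phi=\tfrac12\operatorname{tr}(A_\Phi^2)$. The outer type of $x$ is ''center'' if $C_\Phi<0$, ''saddle'' if $C_\Phi>0$, and $x$ is degenerate if $C_\Phi=0$. The paper computes $C_\Phi$ with $\Phi=\Phi_2$. *)

From Stdlib Require Import Reals Lra.
From Coquelicot Require Import Coquelicot.
Open Scope R_scope.

(** Points of e(3,2)^* = R^9, coordinates indexed by nat:
    0,1,2 = M1,M2,M3 ; 3,4,5 = alpha1,alpha2,alpha3 ; 6,7,8 = beta1,beta2,beta3.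
    (Coordinates >= 9 are irrelevant and never used.) *)
Definition pt := nat -> R.

Definition upd (y : pt) (i : nat) (t : R) : pt :=
  fun k => if Nat.eqb k i then y k + t else y k.

Definition pderiv (f : pt -> R) (i : nat) (y : pt) : R :=
  Derive (fun t => f (upd y i t)) 0.

(** Lie--Poisson Hamiltonian vector field sgrad Phi on e(3,2)^*:
    dM = M x Phi_M + alpha x Phi_alpha + beta x Phi_beta,
    dalpha = alpha x Phi_M, dbeta = beta x Phi_M. *)
Definition cross1 (u1 u2 u3 v1 v2 v3 : R) := u2 * v3 - u3 * v2.
Definition cross2 (u1 u2 u3 v1 v2 v3 : R) := u3 * v1 - u1 * v3.
Definition cross3 (u1 u2 u3 v1 v2 v3 : R) := u1 * v2 - u2 * v1.

Definition sgrad (Phi : pt -> R) (y : pt) : pt :=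
  let g := fun i => pderiv Phi i y in
  let crs := fun (c : R -> R -> R -> R -> R -> R -> R) =>
    c (y 0%nat) (y 1%nat) (y 2%nat) (g 0%nat) (g 1%nat) (g 2%nat)
    + c (y 3%nat) (y 4%nat) (y 5%nat) (g 3%nat) (g 4%nat) (g 5%nat)
    + c (y 6%nat) (y 7%nat) (y 8%nat) (g 6%nat) (g 7%nat) (g 8%nat) in
  fun k =>
    match k with
    | 0%nat => crs cross1
    | 1%nat => crs cross2
    | 2%nat => crs cross3
    | 3%nat => cross1 (y 3%nat) (y 4%nat) (y 5%nat) (g 0%nat) (g 1%nat) (g 2%nat)
    | 4%nat => cross2 (y 3%nat) (y 4%nat) (y 5%nat) (g 0%nat) (g 1%nat) (g 2%nat)
    | 5%nat => cross3 (y 3%nat) (y 4%nat) (y 5%nat) (g 0%nat) (g 1%nat) (g 2%nat)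
    | 6%nat => cross1 (y 6%nat) (y 7%nat) (y 8%nat) (g 0%nat) (g 1%nat) (g 2%nat)
    | 7%nat => cross2 (y 6%nat) (y 7%nat) (y 8%nat) (g 0%nat) (g 1%nat) (g 2%nat)
    | 8%nat => cross3 (y 6%nat) (y 7%nat) (y 8%nat) (g 0%nat) (g 1%nat) (g 2%nat)
    | _ => 0
    end.

Definition linA (Phi : pt -> R) (x : pt) (i j : nat) : R :=
  pderiv (fun y => sgrad Phi y i) j x.

Definition C_Phi (Phi : pt -> R) (x : pt) : R :=
  / 2 * sum_f_R0 (fun i => sum_f_R0 (fun j => linA Phi x i j * linA Phi x j i) 8) 8.

Definition outer_center (Phi : pt -> R) (x : pt) : Prop := C_Phi Phi x < 0.
Definition outer_saddle (Phi : pt -> R) (x : pt) : Prop := C_Phi Phi x > 0.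
Definition outer_degenerate (Phi : pt -> R) (x : pt) : Prop := C_Phi Phi x = 0.

Definition in_P6 (a b : R) (y : pt) : Prop :=
  y 3%nat ^ 2 + y 4%nat ^ 2 + y 5%nat ^ 2 = a ^ 2 /\
  y 6%nat ^ 2 + y 7%nat ^ 2 + y 8%nat ^ 2 = b ^ 2 /\
  y 3%nat * y 6%nat + y 4%nat * y 7%nat + y 5%nat * y 8%nat = 0.

(** Complex variables (lambda = 0, so w3 = M3) *)
Definition x1 (y : pt) : C := (y 3%nat - y 7%nat, y 4%nat + y 6%nat).
Definition x2 (y : pt) : C := (y 3%nat - y 7%nat, - (y 4%nat + y 6%nat)).
Definition z1 (y : pt) : C := (y 5%nat, y 8%nat).
Definition z2 (y : pt) : C := (y 5%nat, - y 8%nat).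
Definition w1 (y : pt) : C := (y 0%nat / 2, y 1%nat / 2).
Definition w2 (y : pt) : C := (y 0%nat / 2, - (y 1%nat / 2)).
Definition w3 (y : pt) : C := RtoC (y 2%nat).

Section GTFG.
Variables (a b e0 e1 : R).
Definition r2 : R := a ^ 2 - b ^ 2.

(** sqrt(x1 x2) = |x1| *)
Definition sq12 (y : pt) : C := RtoC (Cmod (x1 y)).

Definition xi1 (y : pt) : C :=
  (w1 y * w1 y + RtoC e0 * x1 y
   - Ci * RtoC e1 * (x1 y * w3 y - RtoC 2 * z1 y * w1 y) - RtoC (e1 ^ 2 * r2))%C.
Definition xi2 (y : pt) : C :=
  (w2 y * w2 y + RtoC e0 * x2 y
   + Ci * RtoC e1 * (x2 y * w3 y - RtoC 2 * z2 y * w2 y) - RtoC (e1 ^ 2 * r2))%C.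

Definition Fc (y : pt) : C :=
  (sq12 y * w3 y - (x2 y * z1 y * w1 y + x1 y * z2 y * w2 y) / sq12 y
   + Ci * RtoC e1 * RtoC r2 * (x1 y - x2 y) / sq12 y)%C.
Definition F1c (y : pt) : C :=
  (x2 y / x1 y * xi1 y - x1 y / x2 y * xi2 y)%C.
(** partial integral M (complex expression; it is real-valued) *)
Definition Mc (y : pt) : C :=
  (RtoC (/ (2 * r2)) * (x2 y / x1 y * xi1 y + x1 y / x2 y * xi2 y) + RtoC (e1 ^ 2))%C.
(** partial integral L (complex expression; it is real-valued) *)
Definition Lc (y : pt) : C :=
  (/ sq12 y * ((w1 y + Ci * RtoC e1 * z1 y) * (w2 y - Ci * RtoC e1 * z2 y)
               + (x1 y * x2 y + z1 y * z2 y) * (Mc y - RtoC (e1 ^ 2)))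
   + RtoC (e1 ^ 2) * sq12 y)%C.

Definition Mr (y : pt) : R := Re (Mc y).
Definition Lr (y : pt) : R := Re (Lc y).

Definition Phi2 (y : pt) : R :=
  Re (RtoC (/ 4) * F1c y * F1c y - Fc y * Fc y * (Mc y - RtoC (e1 ^ 2)))%C.

End GTFG.

From Stdlib Require Import Reals Lra.
From Coquelicot Require Import Coquelicot.
Open Scope R_scope.

(* Away from x1 = 0 the complex expressions of the paper are rational in the coordinates:
   with D = |x1|^2 there are polynomials P, Q (imaginary and real part of conj(x1)^2 xi1)
   and N (= |x1| F) such that F1 = 2 i P / D, F = N / |x1| and M - e1^2 = Q / (r^2 D), hence
   Phi2 = -(P^2 + N^2 Q / r^2) / D^2.  On M2 we have P = N = 0, so the Hessian of Phi2 is
   the rank-two form al dP dP^T + be dN dN^T, and the antisymmetry of the Poisson tensor J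
   gives C_Phi = 1/2 tr((J H)^2) = - al be {P, N}^2.  Finally {P, N} = r^2 D |x1| L modulo N
   and the Casimir alpha.beta, whence C_Phi = -4 r^4 (M - e1^2) L^2. *)

Inductive expr :=
  | Var (i : nat) | Cst (c : R) | Add (p q : expr) | Mul (p q : expr) | Opp (p : expr).

Fixpoint eval (p : expr) (y : pt) : R :=
  match p with
  | Var i => y i
  | Cst c => c
  | Add p q => eval p y + eval q y
  | Mul p q => eval p y * eval q y
  | Opp p => - eval p y
  end.

Fixpoint deriv (k : nat) (p : expr) : expr :=
  match p with
  | Var i => if Nat.eqb i k then Cst 1 else Cst 0
  | Cst _ => Cst 0
  | Add p q => Add (deriv k p) (deriv k q)
  | Mul p q => Add (Mul (deriv k p) q) (Mul p (deriv k q))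
  | Opp p => Opp (deriv k p)
  end.

Lemma upd_0 (y : pt) (k i : nat) : upd y k 0 i = y i.
Proof. unfold upd; destruct (Nat.eqb i k); [apply Rplus_0_r | reflexivity]. Qed.

Lemma eval_upd_0 (p : expr) (y : pt) (k : nat) : eval p (upd y k 0) = eval p y.
Proof. induction p; simpl; rewrite ?upd_0; congruence. Qed.

Lemma derivable_upd (y : pt) (k i : nat) (t : R) :
  derivable_pt_lim (fun s => upd y k s i) t (if Nat.eqb i k then 1 else 0).
Proof.
  unfold upd; destruct (Nat.eqb i k).
  - rewrite <- (Rplus_0_l 1).
    apply derivable_pt_lim_plus; [apply derivable_pt_lim_const | apply derivable_pt_lim_id].
  - apply derivable_pt_lim_const.
Qed.

Lemma eval_deriv (p : expr) (y : pt) (k : nat) (t : R) :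
  derivable_pt_lim (fun s => eval p (upd y k s)) t (eval (deriv k p) (upd y k t)).
Proof.
  induction p; simpl.
  - generalize (derivable_upd y k i t); destruct (Nat.eqb i k); auto.
  - apply derivable_pt_lim_const.
  - now apply derivable_pt_lim_plus.
  - now apply derivable_pt_lim_mult.
  - now apply derivable_pt_lim_opp.
Qed.

Lemma locally_neq0 (f : R -> R) (t l : R) :
  derivable_pt_lim f t l -> f t <> 0 -> locally t (fun s => f s <> 0).
Proof.
  intros Hf Hft.
  pose proof (ex_derive_continuous f t (ex_intro _ l (proj2 (is_derive_Reals f t l) Hf))) as Hc.
  exact (Hc _ (open_neq 0 (f t) Hft)).
Qed.

Definition cexpr := (expr * expr)%type.
Definition cadd (u v : cexpr) : cexpr := (Add (fst u) (fst v), Add (snd u) (snd v)).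
Definition csub (u v : cexpr) : cexpr := (Add (fst u) (Opp (fst v)), Add (snd u) (Opp (snd v))).
Definition cmul (u v : cexpr) : cexpr :=
  (Add (Mul (fst u) (fst v)) (Opp (Mul (snd u) (snd v))),
   Add (Mul (fst u) (snd v)) (Mul (snd u) (fst v))).
Definition cconj (u : cexpr) : cexpr := (fst u, Opp (snd u)).
Definition creal (p : expr) : cexpr := (p, Cst 0).
Definition cimag : cexpr := (Cst 0, Cst 1).

Definition X_e : expr := Add (Var 3) (Opp (Var 7)).
Definition Y_e : expr := Add (Var 4) (Var 6).
Definition x1_e : cexpr := (X_e, Y_e).
Definition z1_e : cexpr := (Var 5, Var 8).
Definition w1_e : cexpr := (Mul (Cst (/ 2)) (Var 0), Mul (Cst (/ 2)) (Var 1)).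
Definition D_e : expr := Add (Mul X_e X_e) (Mul Y_e Y_e).

Definition xi1_e (e0 e1 r : R) : cexpr :=
  csub (csub (cadd (cmul w1_e w1_e) (cmul (creal (Cst e0)) x1_e))
             (cmul (cmul cimag (creal (Cst e1)))
                   (csub (cmul x1_e (creal (Var 2))) (cmul (creal (Cst 2)) (cmul z1_e w1_e)))))
       (creal (Cst (e1 ^ 2 * r))).

Definition P_e (e0 e1 r : R) : expr := snd (cmul (cmul (cconj x1_e) (cconj x1_e)) (xi1_e e0 e1 r)).
Definition Q_e (e0 e1 r : R) : expr := fst (cmul (cmul (cconj x1_e) (cconj x1_e)) (xi1_e e0 e1 r)).
Definition N_e (e1 r : R) : expr :=
  Add (Add (Mul D_e (Var 2)) (Opp (Mul (Cst 2) (fst (cmul (cconj x1_e) (cmul z1_e w1_e))))))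
      (Opp (Mul (Cst 2) (Mul (Cst (e1 * r)) Y_e))).

Definition wz_e (e1 : R) : cexpr := cadd w1_e (cmul (cmul cimag (creal (Cst e1))) z1_e).
Definition W_e (e1 : R) : expr := fst (cmul (wz_e e1) (cconj (wz_e e1))).
Definition Z_e : expr := Add (fst (cmul x1_e (cconj x1_e))) (fst (cmul z1_e (cconj z1_e))).
Definition L_e (e0 e1 r : R) : expr :=
  Add (Add (Mul (Mul (Cst r) D_e) (W_e e1)) (Mul Z_e (Q_e e0 e1 r)))
      (Mul (Cst (e1 ^ 2 * r)) (Mul D_e D_e)).

Lemma D_e_eq (y : pt) : eval D_e y = (y 3%nat - y 7%nat) ^ 2 + (y 4%nat + y 6%nat) ^ 2.
Proof. simpl; ring. Qed.

Lemma Cmod_x1_sq (y : pt) : Cmod (x1 y) * Cmod (x1 y) = eval D_e y.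
Proof.
  unfold Cmod, x1; simpl fst; simpl snd.
  rewrite sqrt_sqrt, D_e_eq; [ring |].
  apply Rplus_le_le_0_compat; apply pow2_ge_0.
Qed.

Lemma Cmod_x1_neq0 (y : pt) : eval D_e y <> 0 -> Cmod (x1 y) <> 0.
Proof. intros HD H; apply HD; rewrite <- Cmod_x1_sq, H; ring. Qed.

Lemma D_e_neq0 (y : pt) : x1 y <> 0%C -> eval D_e y <> 0.
Proof.
  intros Hx HD; apply Hx; rewrite D_e_eq in HD; unfold x1.
  pose proof (pow2_ge_0 (y 3%nat - y 7%nat)); pose proof (pow2_ge_0 (y 4%nat + y 6%nat)).
  assert (E1 : y 3%nat - y 7%nat = 0) by (apply Rsqr_0_uniq; unfold Rsqr; lra).
  assert (E2 : y 4%nat + y 6%nat = 0) by (apply Rsqr_0_uniq; unfold Rsqr; lra).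
  now rewrite E1, E2.
Qed.

Ltac solve_D_neq0 HD :=
  match type of HD with
  | eval D_e ?y <> 0 =>
      match goal with
      | |- ?e <> 0 => first [ replace e with (eval D_e y) by (simpl; ring); exact HD | assumption ]
      end
  end.

Definition Phi2_form (p n q d r : R) : R := - ((p / d) ^ 2 + (n / d) ^ 2 * (q / r)).

Section NormalForms.
Variables (a b e0 e1 : R) (y : pt).
Hypotheses (HD : eval D_e y <> 0) (Hr : r2 a b <> 0).

Lemma Fc_eq : Fc a b e1 y = RtoC (eval (N_e e1 (r2 a b)) y / Cmod (x1 y)).
Proof.
  assert (Hs := Cmod_x1_neq0 y HD).
  assert (HN : eval (N_e e1 (r2 a b)) y = Cmod (x1 y) * Cmod (x1 y) * y 2%nat
     - 2 * eval (fst (cmul (cconj x1_e) (cmul z1_e w1_e))) y - 2 * (e1 * r2 a b * eval Y_e y))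
    by (rewrite Cmod_x1_sq; simpl; ring).
  rewrite HN. unfold Fc, sq12, x2, z1, z2, w1, w2, w3.
  set (s := Cmod (x1 y)) in *. unfold x1 in *.
  apply injective_projections; simpl; field; auto.
Qed.

Lemma F1c_eq : F1c a b e0 e1 y = (0, 2 * eval (P_e e0 e1 (r2 a b)) y / eval D_e y).
Proof.
  unfold F1c, xi1, xi2, x1, x2, z1, z2, w1, w2, w3.
  apply injective_projections; simpl; field; repeat split; solve_D_neq0 HD.
Qed.

Lemma Mc_eq : Mc a b e0 e1 y = RtoC (eval (Q_e e0 e1 (r2 a b)) y / (r2 a b * eval D_e y) + e1 ^ 2).
Proof.
  unfold Mc, xi1, xi2, x1, x2, z1, z2, w1, w2, w3.
  apply injective_projections; simpl; field; repeat split; solve_D_neq0 HD.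
Qed.

Lemma Lr_eq :
  Lr a b e0 e1 y = eval (L_e e0 e1 (r2 a b)) y / (r2 a b * eval D_e y * Cmod (x1 y)).
Proof.
  assert (Hs := Cmod_x1_neq0 y HD).
  unfold Lr, Lc. rewrite Mc_eq.
  unfold L_e; cbn [eval]; rewrite <- Cmod_x1_sq.
  unfold sq12, x2, z1, z2, w1, w2, w3.
  set (s := Cmod (x1 y)) in *. set (Q := eval (Q_e e0 e1 (r2 a b)) y). clearbody s Q.
  unfold x1. simpl. field; auto.
Qed.

Lemma Phi2_eq :
  Phi2 a b e0 e1 y = Phi2_form (eval (P_e e0 e1 (r2 a b)) y) (eval (N_e e1 (r2 a b)) y)
                       (eval (Q_e e0 e1 (r2 a b)) y) (eval D_e y) (r2 a b).
Proof.
  assert (Hs := Cmod_x1_neq0 y HD).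
  unfold Phi2, Phi2_form. rewrite F1c_eq, Fc_eq, Mc_eq, <- Cmod_x1_sq.
  set (s := Cmod (x1 y)) in *. set (P := eval (P_e e0 e1 (r2 a b)) y).
  set (N := eval (N_e e1 (r2 a b)) y). set (Q := eval (Q_e e0 e1 (r2 a b)) y).
  clearbody s P N Q. simpl. field; auto.
Qed.

Lemma N_e_eq0 : Fc a b e1 y = 0%C -> eval (N_e e1 (r2 a b)) y = 0.
Proof.
  intros HF; rewrite Fc_eq in HF.
  apply (f_equal fst) in HF; unfold RtoC in HF; cbn [fst] in HF.
  destruct (Rmult_integral _ _ HF) as [H | H]; [exact H |].
  exfalso; exact (Rinv_neq_0_compat _ (Cmod_x1_neq0 y HD) H).
Qed.

Lemma P_e_eq0 : F1c a b e0 e1 y = 0%C -> eval (P_e e0 e1 (r2 a b)) y = 0.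
Proof.
  intros HF1; rewrite F1c_eq in HF1.
  apply (f_equal snd) in HF1; unfold RtoC in HF1; cbn [snd] in HF1.
  destruct (Rmult_integral _ _ HF1) as [H | H]; [lra |].
  exfalso; exact (Rinv_neq_0_compat _ HD H).
Qed.

End NormalForms.

Lemma derivable_pt_lim_value (f : R -> R) (t l l' : R) :
  derivable_pt_lim f t l -> l = l' -> derivable_pt_lim f t l'.
Proof. now intros H <-. Qed.

Ltac derivable_arith :=
  repeat first
    [ apply derivable_pt_lim_opp | apply derivable_pt_lim_plus | apply derivable_pt_lim_minus
    | apply derivable_pt_lim_div | apply derivable_pt_lim_mult | apply derivable_pt_lim_const
    | apply Rmult_integral_contrapositive_currified | eassumption | progress cbv beta ].

Definition Phi2_form_deriv (p n q d p' n' q' d' r : R) : R :=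
  - (2 * (p / d) * ((p' * d - p * d') / (d * d))
     + (2 * (n / d) * ((n' * d - n * d') / (d * d)) * (q / r) + (n / d) * (n / d) * (q' / r))).

Lemma derivable_Phi2_form (p n q d : R -> R) (p' n' q' d' r t : R) :
  derivable_pt_lim p t p' -> derivable_pt_lim n t n' -> derivable_pt_lim q t q' ->
  derivable_pt_lim d t d' -> d t <> 0 -> r <> 0 ->
  derivable_pt_lim (fun s => Phi2_form (p s) (n s) (q s) (d s) r) t
    (Phi2_form_deriv (p t) (n t) (q t) (d t) p' n' q' d' r).
Proof.
  intros Hp Hn Hq Hd Hdt Hr.
  apply (derivable_pt_lim_ext
    (fun s => - (p s / d s * (p s / d s) + n s / d s * (n s / d s) * (q s / r)))).
  { intro s; unfold Phi2_form; ring. }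
  eapply derivable_pt_lim_value; [derivable_arith |].
  unfold Phi2_form_deriv, Rsqr; field; auto.
Qed.

(* At a common zero of p and n only the quadratic terms of Phi2_form survive. *)
Lemma derivable_Phi2_form_deriv_at_zero (p n q d pk nk qk dk : R -> R)
    (p' n' q' d' pk' nk' qk' dk' r t : R) :
  derivable_pt_lim p t p' -> derivable_pt_lim n t n' -> derivable_pt_lim q t q' ->
  derivable_pt_lim d t d' -> derivable_pt_lim pk t pk' -> derivable_pt_lim nk t nk' ->
  derivable_pt_lim qk t qk' -> derivable_pt_lim dk t dk' ->
  p t = 0 -> n t = 0 -> d t <> 0 -> r <> 0 ->
  derivable_pt_lim
    (fun s => Phi2_form_deriv (p s) (n s) (q s) (d s) (pk s) (nk s) (qk s) (dk s) r) t
    (- 2 / (d t * d t) * p' * pk t + - 2 * q t / (r * (d t * d t)) * n' * nk t).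
Proof.
  intros Hp Hn Hq Hd Hpk Hnk Hqk Hdk Hp0 Hn0 Hdt Hr.
  unfold Phi2_form_deriv.
  eapply derivable_pt_lim_value; [derivable_arith |].
  cbv beta; unfold Rsqr; rewrite Hp0, Hn0; field; auto.
Qed.

Definition lie_poisson (y : pt) (g : nat -> R) : pt :=
  let crs := fun (c : R -> R -> R -> R -> R -> R -> R) =>
    c (y 0%nat) (y 1%nat) (y 2%nat) (g 0%nat) (g 1%nat) (g 2%nat)
    + c (y 3%nat) (y 4%nat) (y 5%nat) (g 3%nat) (g 4%nat) (g 5%nat)
    + c (y 6%nat) (y 7%nat) (y 8%nat) (g 6%nat) (g 7%nat) (g 8%nat) in
  fun k =>
    match k with
    | 0%nat => crs cross1
    | 1%nat => crs cross2
    | 2%nat => crs cross3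
    | 3%nat => cross1 (y 3%nat) (y 4%nat) (y 5%nat) (g 0%nat) (g 1%nat) (g 2%nat)
    | 4%nat => cross2 (y 3%nat) (y 4%nat) (y 5%nat) (g 0%nat) (g 1%nat) (g 2%nat)
    | 5%nat => cross3 (y 3%nat) (y 4%nat) (y 5%nat) (g 0%nat) (g 1%nat) (g 2%nat)
    | 6%nat => cross1 (y 6%nat) (y 7%nat) (y 8%nat) (g 0%nat) (g 1%nat) (g 2%nat)
    | 7%nat => cross2 (y 6%nat) (y 7%nat) (y 8%nat) (g 0%nat) (g 1%nat) (g 2%nat)
    | 8%nat => cross3 (y 6%nat) (y 7%nat) (y 8%nat) (g 0%nat) (g 1%nat) (g 2%nat)
    | _ => 0
    end.

Lemma sgrad_lie_poisson (Phi : pt -> R) (y : pt) : sgrad Phi y = lie_poisson y (fun k => pderiv Phi k y).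
Proof. reflexivity. Qed.

Lemma lie_poisson_ext (y : pt) (g g' : nat -> R) (i : nat) :
  (forall k, g k = g' k) -> lie_poisson y g i = lie_poisson y g' i.
Proof. intros H; unfold lie_poisson; rewrite !H; reflexivity. Qed.

(* At a critical point the variation of the Poisson tensor does not contribute. *)
Lemma derivable_lie_poisson_critical (x : pt) (j i : nat) (g : nat -> R -> R) (g' : nat -> R) :
  (forall k, derivable_pt_lim (g k) 0 (g' k)) -> (forall k, g k 0 = 0) ->
  derivable_pt_lim (fun t => lie_poisson (upd x j t) (fun k => g k t) i) 0 (lie_poisson x g' i).
Proof.
  intros Hg Hg0.
  destruct i as [|[|[|[|[|[|[|[|[|i]]]]]]]]]; unfold lie_poisson, cross1, cross2, cross3;
    (eapply derivable_pt_lim_value;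
     [ repeat first [ apply derivable_pt_lim_minus | apply derivable_pt_lim_plus
                    | apply derivable_pt_lim_mult | apply derivable_upd | apply Hg
                    | apply derivable_pt_lim_const ] | ]);
    rewrite ?Hg0, ?upd_0; ring.
Qed.

Section Phi2Derivatives.
Variables (a b e0 e1 : R).
Let P := P_e e0 e1 (r2 a b).
Let N := N_e e1 (r2 a b).
Let Q := Q_e e0 e1 (r2 a b).
Hypothesis Hr : r2 a b <> 0.

Lemma pderiv_Phi2 (k : nat) (y : pt) : eval D_e y <> 0 ->
  pderiv (Phi2 a b e0 e1) k y =
  Phi2_form_deriv (eval P y) (eval N y) (eval Q y) (eval D_e y)
    (eval (deriv k P) y) (eval (deriv k N) y) (eval (deriv k Q) y) (eval (deriv k D_e) y) (r2 a b).
Proof.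
  intros HD. unfold pderiv. apply is_derive_unique.
  apply is_derive_ext_loc with (f := fun t => Phi2_form (eval P (upd y k t)) (eval N (upd y k t))
                                  (eval Q (upd y k t)) (eval D_e (upd y k t)) (r2 a b)).
  - assert (HD0 : eval D_e (upd y k 0) <> 0) by now rewrite eval_upd_0.
    eapply filter_imp; [| exact (locally_neq0 _ _ _ (eval_deriv D_e y k 0) HD0)].
    intros t Ht; symmetry; exact (Phi2_eq a b e0 e1 _ Ht Hr).
  - apply is_derive_Reals.
    rewrite <- (eval_upd_0 P y k), <- (eval_upd_0 N y k), <- (eval_upd_0 Q y k),
      <- (eval_upd_0 D_e y k), <- (eval_upd_0 (deriv k P) y k), <- (eval_upd_0 (deriv k N) y k),
      <- (eval_upd_0 (deriv k Q) y k), <- (eval_upd_0 (deriv k D_e) y k).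
    apply derivable_Phi2_form; try apply eval_deriv; auto.
    now rewrite eval_upd_0.
Qed.

Lemma linA_Phi2 (x : pt) (i j : nat) :
  eval D_e x <> 0 -> eval P x = 0 -> eval N x = 0 ->
  linA (Phi2 a b e0 e1) x i j =
  lie_poisson x (fun k => - 2 / (eval D_e x * eval D_e x) * eval (deriv j P) x * eval (deriv k P) x
     + - 2 * eval Q x / (r2 a b * (eval D_e x * eval D_e x)) * eval (deriv j N) x * eval (deriv k N) x) i.
Proof.
  intros HD HP HN.
  unfold linA, pderiv at 1. apply is_derive_unique.
  apply is_derive_ext_loc with (f := fun t => lie_poisson (upd x j t) (fun k =>
      Phi2_form_deriv (eval P (upd x j t)) (eval N (upd x j t)) (eval Q (upd x j t))
        (eval D_e (upd x j t)) (eval (deriv k P) (upd x j t)) (eval (deriv k N) (upd x j t))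
        (eval (deriv k Q) (upd x j t)) (eval (deriv k D_e) (upd x j t)) (r2 a b)) i).
  - assert (HD0 : eval D_e (upd x j 0) <> 0) by now rewrite eval_upd_0.
    eapply filter_imp; [| exact (locally_neq0 _ _ _ (eval_deriv D_e x j 0) HD0)].
    intros t Ht. rewrite sgrad_lie_poisson. apply lie_poisson_ext. intro k.
    now rewrite pderiv_Phi2.
  - apply is_derive_Reals, derivable_lie_poisson_critical.
    + intro k. eapply derivable_pt_lim_value.
      * eapply derivable_Phi2_form_deriv_at_zero; try apply eval_deriv; rewrite ?eval_upd_0; auto.
      * now rewrite !eval_upd_0.
    + intro k. rewrite !eval_upd_0, HP, HN. unfold Phi2_form_deriv, Rdiv. ring.
Qed.

End Phi2Derivatives.

Definition poisson_pairing (x : pt) (u v : nat -> R) : R :=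
  sum_f_R0 (fun k => u k * lie_poisson x v k) 8.

(* Antisymmetry of the Poisson tensor J kills the diagonal terms of tr((J H)^2) for
   H = al u u^T + be v v^T. *)
Lemma half_trace_sq_rank2 (x : pt) (u v : nat -> R) (al be : R) :
  / 2 * sum_f_R0 (fun i => sum_f_R0 (fun j =>
      lie_poisson x (fun k => al * u j * u k + be * v j * v k) i *
      lie_poisson x (fun k => al * u i * u k + be * v i * v k) j) 8) 8
  = - (al * be) * poisson_pairing x u v ^ 2.
Proof.
  unfold poisson_pairing; simpl sum_f_R0.
  unfold lie_poisson, cross1, cross2, cross3; cbv beta zeta. field.
Qed.

Lemma C_Phi_Phi2 (a b e0 e1 : R) (x : pt) :
  eval D_e x <> 0 -> r2 a b <> 0 ->
  eval (P_e e0 e1 (r2 a b)) x = 0 -> eval (N_e e1 (r2 a b)) x = 0 ->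
  C_Phi (Phi2 a b e0 e1) x =
  - 4 * eval (Q_e e0 e1 (r2 a b)) x / (r2 a b * eval D_e x ^ 4)
  * poisson_pairing x (fun k => eval (deriv k (P_e e0 e1 (r2 a b))) x)
                      (fun k => eval (deriv k (N_e e1 (r2 a b))) x) ^ 2.
Proof.
  intros HD Hr HP HN. unfold C_Phi.
  rewrite (sum_eq _ _ 8 (fun i _ => sum_eq _ _ 8 (fun j _ =>
             f_equal2 Rmult (linA_Phi2 a b e0 e1 Hr x i j HD HP HN)
                            (linA_Phi2 a b e0 e1 Hr x j i HD HP HN)))).
  rewrite half_trace_sq_rank2. field; auto.
Qed.

Lemma poisson_pairing_P_N (e0 e1 r : R) (x : pt) :
  r = (x 3%nat ^ 2 + x 4%nat ^ 2 + x 5%nat ^ 2) - (x 6%nat ^ 2 + x 7%nat ^ 2 + x 8%nat ^ 2) ->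
  x 3%nat * x 6%nat + x 4%nat * x 7%nat + x 5%nat * x 8%nat = 0 ->
  eval (N_e e1 r) x = 0 ->
  poisson_pairing x (fun k => eval (deriv k (P_e e0 e1 r)) x) (fun k => eval (deriv k (N_e e1 r)) x)
  = eval (L_e e0 e1 r) x.
Proof.
  intros Hr Hab HN.
  set (X := x 3%nat - x 7%nat). set (Y := x 4%nat + x 6%nat).
  assert (Hcert : poisson_pairing x (fun k => eval (deriv k (P_e e0 e1 r)) x)
                    (fun k => eval (deriv k (N_e e1 r)) x) - eval (L_e e0 e1 r) x
    = (e1 * Y * (x 5%nat ^ 2 + x 8%nat ^ 2)
       + / 2 * (x 1%nat * (x 5%nat * Y + x 8%nat * X) + x 0%nat * (x 5%nat * X - x 8%nat * Y)))
      * eval (N_e e1 r) x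
    + 2 * e1 * Y * (x 1%nat * (x 8%nat * Y - x 5%nat * X) + x 0%nat * (x 5%nat * Y + x 8%nat * X))
      * (x 3%nat * x 6%nat + x 4%nat * x 7%nat + x 5%nat * x 8%nat)).
  { subst r X Y. unfold poisson_pairing, lie_poisson, cross1, cross2, cross3.
    simpl. field. }
  rewrite HN, Hab in Hcert. lra.
Qed.

Lemma r2_pos (a b : R) : 0 < b -> b < a -> 0 < r2 a b.
Proof.
  intros Hb Hab; unfold r2.
  replace (a ^ 2 - b ^ 2) with ((a - b) * (a + b)) by ring.
  apply Rmult_lt_0_compat; lra.
Qed.

Lemma C_Phi_Phi2_M2 (a b e0 e1 : R) (x : pt) :
  0 < b -> b < a -> in_P6 a b x -> x1 x <> 0%C ->
  Fc a b e1 x = 0%C -> F1c a b e0 e1 x = 0%C ->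
  C_Phi (Phi2 a b e0 e1) x
  = - 4 * r2 a b ^ 2 * (Mr a b e0 e1 x - e1 ^ 2) * Lr a b e0 e1 x ^ 2.
Proof.
  intros Hb Hab [Ha [Hb2 Hab0]] Hx1 HF HF1.
  assert (Hr : r2 a b <> 0) by (apply Rgt_not_eq, r2_pos; assumption).
  assert (HD := D_e_neq0 x Hx1).
  assert (HN := N_e_eq0 a b e1 x HD HF).
  assert (HP := P_e_eq0 a b e0 e1 x HD HF1).
  assert (Hs := Cmod_x1_neq0 x HD).
  rewrite C_Phi_Phi2, poisson_pairing_P_N by (unfold r2; rewrite ?Ha, ?Hb2; auto).
  unfold Mr; rewrite Mc_eq, Lr_eq by assumption; unfold Re, RtoC; cbn [fst].
  rewrite <- Cmod_x1_sq.
  set (s := Cmod (x1 x)) in *.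
  set (Q := eval (Q_e e0 e1 (r2 a b)) x). set (L := eval (L_e e0 e1 (r2 a b)) x).
  clearbody s Q L. field; auto.
Qed.

Theorem theorem5 :
  forall (a b e0 e1 : R),
    0 < b -> b < a -> 0 <= e0 ->
    forall x : pt,
      in_P6 a b x ->
      x1 x <> 0%C ->
      Fc a b e1 x = 0%C ->
      F1c a b e0 e1 x = 0%C ->
      C_Phi (Phi2 a b e0 e1) x
        = - 4 * (r2 a b) ^ 2 * (Mr a b e0 e1 x - e1 ^ 2) * (Lr a b e0 e1 x) ^ 2
      /\ ((Mr a b e0 e1 x = e1 ^ 2 \/ Lr a b e0 e1 x = 0) ->
            outer_degenerate (Phi2 a b e0 e1) x)
      /\ (Lr a b e0 e1 x <> 0 -> Mr a b e0 e1 x > e1 ^ 2 ->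
            outer_center (Phi2 a b e0 e1) x)
      /\ (Lr a b e0 e1 x <> 0 -> Mr a b e0 e1 x < e1 ^ 2 ->
            outer_saddle (Phi2 a b e0 e1) x).
Proof.
  intros a b e0 e1 Hb Hab _ x HP6 Hx1 HF HF1.
  assert (HC := C_Phi_Phi2_M2 a b e0 e1 x Hb Hab HP6 Hx1 HF HF1).
  unfold outer_degenerate, outer_center, outer_saddle; rewrite HC.
  assert (Hr : 0 < r2 a b ^ 2) by (apply pow_lt, r2_pos; assumption).
  set (M := Mr a b e0 e1 x); set (L := Lr a b e0 e1 x).
  repeat split.
  - intros [-> | ->]; ring.
  - intros HL HM.
    assert (HL2 : 0 < L ^ 2) by (rewrite <- Rsqr_pow2; now apply Rsqr_pos_lt).
    assert (0 < r2 a b ^ 2 * (M - e1 ^ 2) * L ^ 2)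
      by (apply Rmult_lt_0_compat; [apply Rmult_lt_0_compat |]; lra).
    lra.
  - intros HL HM.
    assert (HL2 : 0 < L ^ 2) by (rewrite <- Rsqr_pow2; now apply Rsqr_pos_lt).
    assert (0 < r2 a b ^ 2 * (e1 ^ 2 - M) * L ^ 2)
      by (apply Rmult_lt_0_compat; [apply Rmult_lt_0_compat |]; lra).
    lra.
Qed.
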